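(* Let $(\mathcal T,d)$ be a compact rooted $\mathbb R$-tree with root $\rho$, let $N\ge1$, and let $(W_\sigma)_{\sigma\in\mathcal T}$ be a real-valued centered Gaussian process with $\mathrm{Cov}(W_\sigma,W_{\sigma'})=d(\rho,\sigma\wedge\sigma')$. Then there is a constant $c_{1,N}>0$ depending only on $N$ such that for every $\sigma\in\mathcal T$ and all $\sigma_1,\dots,\sigma_N\in\mathcal T$, $$\mathrm{Var}\big(W_\sigma\mid W_{\sigma_0},W_{\sigma_1},\dots,W_{\sigma_N}\big)\ \ge\ c_{1,N}\min_{0\le i\le N}d(\sigma,\sigma_i),$$ where $\sigma_0:=\rho$.
   Context: An $\mathbb R$-tree is a metric space in which any two points are joined by a unique geodesic arc $[\![\sigma,\sigma']\!]$ isometric to a segment, and every injective continuous path between two points has image that geodesic. $\sigma\wedge\sigma'$ denotes the most recent common ancestor, i.e. the point with $[\![\rho,\sigma\wedge\sigma']\!]=[\![\rho,\sigma]\!]\cap[\![\rho,\sigma']\!]$. The conditional variance is $\mathrm{Var}(W_\sigma\mid W_{\sigma_0},\dots,W_{\sigma_N})=\inf_{a\in\mathbb R^{N+1}}\mathrm{Var}\big(W_\sigma-\sum_{i=0}^N a_iW_{\sigma_i}\big)$. *)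

From Stdlib Require Import Reals Lra.
Open Scope R_scope.

Definition is_metric {T : Type} (d : T -> T -> R) : Prop :=
  (forall x y, 0 <= d x y) /\
  (forall x y, d x y = 0 <-> x = y) /\
  (forall x y, d x y = d y x) /\
  (forall x y z, d x z <= d x y + d y z).

(** Compactness (sequential; equivalent to compactness for metric spaces). *)
Definition seq_compact {T : Type} (d : T -> T -> R) : Prop :=
  forall u : nat -> T, exists (phi : nat -> nat) (l : T),
    (forall n, (phi n < phi (S n))%nat) /\
    (forall eps, 0 < eps -> exists M, forall n, (M <= n)%nat -> d (u (phi n)) l < eps).

Definition is_geodesic {T : Type} (d : T -> T -> R) (x y : T) (g : R -> T) : Prop :=
  g 0 = x /\ g (d x y) = y /\
  forall s t, 0 <= s <= d x y -> 0 <= t <= d x y -> d (g s) (g t) = Rabs (s - t).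

Definition in_arc {T : Type} (d : T -> T -> R) (x y z : T) : Prop :=
  exists g, is_geodesic d x y g /\ exists s, 0 <= s <= d x y /\ g s = z.

Definition inj_cont_path {T : Type} (d : T -> T -> R) (x y : T) (p : R -> T) : Prop :=
  p 0 = x /\ p 1 = y /\
  (forall t, 0 <= t <= 1 -> forall eps, 0 < eps -> exists delta, 0 < delta /\
     forall t', 0 <= t' <= 1 -> Rabs (t - t') < delta -> d (p t) (p t') < eps) /\
  (forall s t, 0 <= s <= 1 -> 0 <= t <= 1 -> p s = p t -> s = t).

Definition is_Rtree {T : Type} (d : T -> T -> R) : Prop :=
  is_metric d /\
  (forall x y, exists g, is_geodesic d x y g) /\
  (forall x y g1 g2, is_geodesic d x y g1 -> is_geodesic d x y g2 ->
     forall s, 0 <= s <= d x y -> g1 s = g2 s) /\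
  (forall x y p, inj_cont_path d x y p ->
     forall z, (exists t, 0 <= t <= 1 /\ p t = z) <-> in_arc d x y z).

Definition is_mrca {T : Type} (d : T -> T -> R) (rho a b m : T) : Prop :=
  forall z, in_arc d rho m z <-> (in_arc d rho a z /\ in_arc d rho b z).

(** Variance of W_sigma - sum_{i=0}^N a_i W_{s i}, computed from the
    covariance function C of the (centered) process W. *)
Definition lin_var {T : Type} (C : T -> T -> R) (sigma : T) (s : nat -> T)
    (N : nat) (a : nat -> R) : R :=
  C sigma sigma
  - 2 * sum_f_R0 (fun i => a i * C sigma (s i)) N
  + sum_f_R0 (fun i => sum_f_R0 (fun j => a i * a j * C (s i) (s j)) N) N.

Fixpoint min_upto (f : nat -> R) (N : nat) : R :=
  match N with
  | O => f O
  | S n => Rmin (min_upto f n) (f (S n))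
  end.

(* Since s_0 = rho and W_rho = 0, adding (1 - sum_i a_i) to a_0 rewrites
   W_sigma - sum_i a_i W_{s_i} as - sum_i b_i (W_{s_i} - W_sigma) with
   sum_i b_i = 1.  The increments W_x - W_sigma have covariance the Gromov
   product (x|y)_sigma, which on an R-tree is an ultrametric:
   (x|y) >= min((x|z), (z|y)).  Such a matrix is the integral over t >= 0 of
   the 0/1 matrices [t <= (s_j|s_k)], each a partial equivalence relation
   whose quadratic form is the sum of the squared class sums of b; by
   Cauchy-Schwarz over the at most N+1 classes it is at least
   (sum_i b_i)^2 / (N+1) = 1/(N+1) whenever t <= min_i (s_i|s_i) =
   min_i d(sigma, s_i).  Hence c = 1/(N+1) works. *)

From Stdlib Require Import Reals Lra Lia Classical.
From Coquelicot Require Import Coquelicot.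
Open Scope R_scope.

Lemma sum_nonneg (f : nat -> R) n :
  (forall i, (i <= n)%nat -> 0 <= f i) -> 0 <= sum_f_R0 f n.
Proof.
  intros Hf. rewrite <- (Rmult_0_l (INR (S n))), <- sum_cte. apply sum_Rle; auto.
Qed.

Lemma sum_zero (f : nat -> R) n :
  (forall i, (i <= n)%nat -> f i = 0) -> sum_f_R0 f n = 0.
Proof.
  intros Hf. rewrite <- (Rmult_0_l (INR (S n))), <- sum_cte. apply sum_eq; auto.
Qed.

Lemma sum_ge_term (f : nat -> R) n j :
  (forall i, (i <= n)%nat -> 0 <= f i) -> (j <= n)%nat -> f j <= sum_f_R0 f n.
Proof.
  induction n as [|n IH]; intros Hf Hj; simpl.
  - replace j with 0%nat by lia. lra.
  - assert (0 <= f (S n)) by (apply Hf; lia).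
    destruct (Nat.eq_dec j (S n)) as [->|Hne].
    + assert (0 <= sum_f_R0 f n) by (apply sum_nonneg; intros; apply Hf; lia). lra.
    + assert (f j <= sum_f_R0 f n) by (apply IH; [intros; apply Hf|]; lia). lra.
Qed.

Lemma sum_mult_l (f : nat -> R) n x :
  sum_f_R0 (fun i => x * f i) n = x * sum_f_R0 f n.
Proof. rewrite scal_sum. apply sum_eq; intros; ring. Qed.

Lemma sum_swap (f : nat -> nat -> R) n m :
  sum_f_R0 (fun i => sum_f_R0 (fun j => f i j) m) n
  = sum_f_R0 (fun j => sum_f_R0 (fun i => f i j) n) m.
Proof.
  induction n as [|n IH]; simpl; [reflexivity|]. rewrite IH, <- sum_plus. reflexivity.
Qed.

Definition delta0 (i : nat) : R := match i with O => 1 | S _ => 0 end.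

Lemma sum_delta0 (f : nat -> R) n : sum_f_R0 (fun i => delta0 i * f i) n = f O.
Proof. induction n as [|n IH]; simpl; [ring|]. rewrite IH. ring. Qed.

Lemma weighted_cauchy_schwarz (w x : nat -> R) n K :
  0 < K -> (forall i, (i <= n)%nat -> 0 <= w i) -> sum_f_R0 w n <= K ->
  (sum_f_R0 (fun i => w i * x i) n) ^ 2 / K <= sum_f_R0 (fun i => w i * x i ^ 2) n.
Proof.
  intros HK Hw HwK.
  set (B := sum_f_R0 (fun i => w i * x i) n).
  set (al := B / K).
  assert (Hsq : 0 <= sum_f_R0 (fun i => w i * (x i - al) ^ 2) n).
  { apply sum_nonneg; intros i Hi. apply Rmult_le_pos; [auto | apply pow2_ge_0]. }
  assert (Hexp : sum_f_R0 (fun i => w i * (x i - al) ^ 2) n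
     = sum_f_R0 (fun i => w i * x i ^ 2) n - 2 * al * B + al ^ 2 * sum_f_R0 w n).
  { unfold B. rewrite <- !sum_mult_l, <- minus_sum, <- sum_plus. apply sum_eq; intros; ring. }
  assert (al ^ 2 * sum_f_R0 w n <= al ^ 2 * K) by (apply Rmult_le_compat_l; [nra | auto]).
  replace (B ^ 2 / K) with (2 * al * B - al ^ 2 * K) by (unfold al; field; lra).
  lra.
Qed.

Definition quad_form (H : nat -> nat -> R) (b : nat -> R) (n : nat) : R :=
  sum_f_R0 (fun j => sum_f_R0 (fun k => b j * b k * H j k) n) n.

Section PartialEquivalence.
Variable n : nat.
Variable E : nat -> nat -> R.
Variable b : nat -> R.
Hypothesis E01 : forall j k, E j k = 0 \/ E j k = 1.
Hypothesis E_sym : forall j k, E j k = E k j.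
Hypothesis E_trans : forall j k l, E j k = 1 -> E k l = 1 -> E j l = 1.

Let class_size j := sum_f_R0 (fun k => E j k) n.
Let class_sum j := sum_f_R0 (fun k => E j k * b k) n.
(* Each class carries total weight 1, so [sum weight] counts the classes. *)
Let weight j := E j j / class_size j.

Lemma E_refl_l j k : E j k = 1 -> E j j = 1.
Proof. intros H. apply (E_trans j k j); [|rewrite E_sym]; auto. Qed.

Lemma E_row_eq j k l : E j k = 1 -> E j l = E k l.
Proof.
  intros H. destruct (E01 j l) as [H1|H1], (E01 k l) as [H2|H2]; try lra.
  - assert (E j l = 1) by (apply (E_trans j k l); auto). lra.
  - assert (E k l = 1) by (apply (E_trans k j l); [rewrite E_sym|]; auto). lra.
Qed.

Lemma E_row_zero j k : E j j = 0 -> E j k = 0.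
Proof. intros H. destruct (E01 j k) as [|H1]; auto. apply E_refl_l in H1. lra. Qed.

Lemma class_size_eq j k : E j k = 1 -> class_size j = class_size k.
Proof. intros H. apply sum_eq; intros l _. apply E_row_eq; auto. Qed.

Lemma class_size_ge1 j : (j <= n)%nat -> E j j = 1 -> 1 <= class_size j.
Proof.
  intros Hj H. rewrite <- H at 1.
  apply (sum_ge_term (fun k => E j k)); auto. intros i _; destruct (E01 j i); lra.
Qed.

Lemma weight_bounds j : (j <= n)%nat -> 0 <= weight j <= 1.
Proof.
  intros Hj. unfold weight. destruct (E01 j j) as [H|H]; rewrite H.
  - unfold Rdiv; rewrite Rmult_0_l; lra.
  - pose proof (class_size_ge1 j Hj H). unfold Rdiv; rewrite Rmult_1_l. split.
    + left; apply Rinv_0_lt_compat; lra.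
    + rewrite <- Rinv_1. apply Rinv_le_contravar; lra.
Qed.

Lemma class_sum_diag k : class_sum k * E k k = class_sum k.
Proof.
  destruct (E01 k k) as [H|H]; rewrite H; [|ring].
  unfold class_sum. rewrite sum_zero; [ring|]. intros l _. rewrite E_row_zero; auto. ring.
Qed.

Lemma sum_weight_E k : (k <= n)%nat -> sum_f_R0 (fun j => weight j * E j k) n = E k k.
Proof.
  intros Hk. destruct (E01 k k) as [H|H].
  - rewrite H. apply sum_zero; intros j _. rewrite E_sym, E_row_zero; auto. ring.
  - transitivity (sum_f_R0 (fun j => / class_size k * E k j) n).
    + apply sum_eq; intros j _. unfold weight. rewrite (E_sym j k).
      destruct (E01 k j) as [H1|H1]; rewrite H1; [ring|].
      rewrite E_sym in H1. rewrite (E_refl_l j k H1).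
      rewrite (class_size_eq j k H1). field.
      pose proof (class_size_ge1 k Hk H). lra.
    + rewrite sum_mult_l, H. change (sum_f_R0 (E k) n) with (class_size k).
      apply Rinv_l. pose proof (class_size_ge1 k Hk H). lra.
Qed.

Lemma sum_weight_class_sum_E k : (k <= n)%nat ->
  sum_f_R0 (fun j => weight j * class_sum j * E j k) n = class_sum k.
Proof.
  intros Hk. rewrite <- (class_sum_diag k), <- (sum_weight_E k Hk), <- sum_mult_l.
  apply sum_eq; intros j _. destruct (E01 j k) as [H|H]; rewrite H; [ring|].
  replace (class_sum j) with (class_sum k); [ring|].
  unfold class_sum. apply sum_eq; intros l _. rewrite (E_row_eq j k l H). ring.
Qed.

Lemma per_quad_lower_bound :
  (sum_f_R0 (fun j => E j j * b j) n) ^ 2 / (INR n + 1) <= quad_form E b n.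
Proof.
  assert (Hlin : sum_f_R0 (fun j => weight j * class_sum j) n
                 = sum_f_R0 (fun j => E j j * b j) n).
  { transitivity (sum_f_R0 (fun j => sum_f_R0 (fun k => weight j * E j k * b k) n) n).
    - apply sum_eq; intros j _. unfold class_sum. rewrite <- sum_mult_l.
      apply sum_eq; intros; ring.
    - rewrite sum_swap. apply sum_eq; intros k Hk.
      rewrite <- (sum_weight_E k Hk), Rmult_comm, <- sum_mult_l. apply sum_eq; intros; ring. }
  assert (Hquad : sum_f_R0 (fun j => weight j * class_sum j ^ 2) n = quad_form E b n).
  { transitivity (sum_f_R0 (fun k => b k * class_sum k) n).
    - transitivity (sum_f_R0 (fun j => sum_f_R0 (fun k => weight j * class_sum j * E j k * b k) n) n).
      + apply sum_eq; intros j _.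
        transitivity (weight j * class_sum j * sum_f_R0 (fun k => E j k * b k) n);
          [unfold class_sum; ring|].
        rewrite <- sum_mult_l. apply sum_eq; intros; ring.
      + rewrite sum_swap. apply sum_eq; intros k Hk.
        rewrite <- (sum_weight_class_sum_E k Hk), <- sum_mult_l. apply sum_eq; intros; ring.
    - apply sum_eq; intros j _. unfold class_sum. rewrite <- sum_mult_l.
      apply sum_eq; intros; ring. }
  assert (Hw : sum_f_R0 weight n <= INR n + 1).
  { replace (INR n + 1) with (1 * INR (S n)) by (rewrite S_INR; ring).
    rewrite <- sum_cte. apply sum_Rle. intros j Hj. apply weight_bounds; auto. }
  rewrite <- Hlin, <- Hquad. apply weighted_cauchy_schwarz; auto.
  - pose proof (pos_INR n). lra.
  - intros j Hj. apply weight_bounds; auto.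
Qed.

End PartialEquivalence.

Definition indic_le (h t : R) : R := if Rle_dec t h then 1 else 0.

Lemma is_RInt_indic_le h M : 0 <= h <= M -> is_RInt (indic_le h) 0 M h.
Proof.
  intros [H0 H1].
  replace h with ((h - 0) * 1 + (M - h) * 0) at 2 by ring.
  apply (is_RInt_Chasles (V := R_NormedModule)) with h.
  - apply (is_RInt_ext (fun _ => 1)); [|exact (is_RInt_const 0 h 1)].
    intros t Ht. rewrite Rmin_left, Rmax_right in Ht by lra.
    unfold indic_le. destruct Rle_dec; lra.
  - apply (is_RInt_ext (fun _ => 0)); [|exact (is_RInt_const h M 0)].
    intros t Ht. rewrite Rmin_left, Rmax_right in Ht by lra.
    unfold indic_le. destruct Rle_dec; lra.
Qed.

Lemma is_RInt_sum (f : nat -> R -> R) (l : nat -> R) a b n :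
  (forall i, (i <= n)%nat -> is_RInt (f i) a b (l i)) ->
  is_RInt (fun t => sum_f_R0 (fun i => f i t) n) a b (sum_f_R0 l n).
Proof.
  induction n as [|n IH]; intros Hf; simpl; [apply Hf; lia|].
  apply (is_RInt_plus (V := R_NormedModule) (fun t => sum_f_R0 (fun i => f i t) n) (f (S n)));
    [apply IH; intros; apply Hf | apply Hf]; lia.
Qed.

Lemma is_RInt_quad_form_levels (H : nat -> nat -> R) (b : nat -> R) n M :
  (forall j k, (j <= n)%nat -> (k <= n)%nat -> 0 <= H j k <= M) ->
  is_RInt (fun t => quad_form (fun j k => indic_le (H j k) t) b n) 0 M (quad_form H b n).
Proof.
  intros HM. unfold quad_form.
  apply (is_RInt_sum (fun j t => sum_f_R0 (fun k => b j * b k * indic_le (H j k) t) n)).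
  intros j Hj. apply (is_RInt_sum (fun k t => b j * b k * indic_le (H j k) t)).
  intros k Hk. apply (is_RInt_scal (V := R_NormedModule)), is_RInt_indic_le; auto.
Qed.

Lemma quad_form_level_lower_bound (H : nat -> nat -> R) (b : nat -> R) n m t :
  (forall j k, H j k = H k j) ->
  (forall j k l, Rmin (H j k) (H k l) <= H j l) ->
  (forall j, (j <= n)%nat -> m <= H j j) ->
  (sum_f_R0 b n) ^ 2 / (INR n + 1) * indic_le m t
  <= quad_form (fun j k => indic_le (H j k) t) b n.
Proof.
  intros Hsym Hultra Hdiag.
  set (E := fun j k => indic_le (H j k) t).
  assert (E01 : forall j k, E j k = 0 \/ E j k = 1)
    by (intros j k; unfold E, indic_le; destruct Rle_dec; auto).
  assert (E_sym : forall j k, E j k = E k j) by (intros j k; unfold E; rewrite Hsym; auto).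
  assert (E_trans : forall j k l, E j k = 1 -> E k l = 1 -> E j l = 1).
  { intros j k l. unfold E, indic_le. specialize (Hultra j k l).
    destruct (Rle_dec t (H j k)), (Rle_dec t (H k l)), (Rle_dec t (H j l)) as [|Hjl]; try lra.
    exfalso. apply Hjl, Rle_trans with (2 := Hultra), Rmin_glb; auto. }
  pose proof (per_quad_lower_bound n E b E01 E_sym E_trans) as Hper.
  assert (Hn : 0 < INR n + 1) by (pose proof (pos_INR n); lra).
  unfold indic_le at 1. destruct (Rle_dec t m) as [Htm|Htm].
  - replace (sum_f_R0 (fun j => E j j * b j) n) with (sum_f_R0 b n) in Hper; [lra|].
    apply sum_eq; intros j Hj. unfold E, indic_le.
    destruct Rle_dec; [ring|]. specialize (Hdiag j Hj). lra.
  - assert (0 <= (sum_f_R0 (fun j => E j j * b j) n) ^ 2 / (INR n + 1))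
      by (apply Rdiv_le_0_compat; [apply pow2_ge_0 | lra]).
    lra.
Qed.

Lemma ultrametric_quad_lower_bound (H : nat -> nat -> R) (b : nat -> R) n m :
  0 <= m ->
  (forall j k, (j <= n)%nat -> (k <= n)%nat -> 0 <= H j k) ->
  (forall j k, H j k = H k j) ->
  (forall j k l, Rmin (H j k) (H k l) <= H j l) ->
  (forall j, (j <= n)%nat -> m <= H j j) ->
  m * (sum_f_R0 b n) ^ 2 / (INR n + 1) <= quad_form H b n.
Proof.
  intros Hm Hnn Hsym Hultra Hdiag.
  set (M := m + sum_f_R0 (fun j => sum_f_R0 (fun k => H j k) n) n).
  assert (Hrow : forall j, (j <= n)%nat -> 0 <= sum_f_R0 (fun k => H j k) n)
    by (intros; apply sum_nonneg; auto).
  assert (HmM : m <= M) by (pose proof (sum_nonneg _ n Hrow); unfold M; lra).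
  assert (HM : forall j k, (j <= n)%nat -> (k <= n)%nat -> 0 <= H j k <= M).
  { intros j k Hj Hk. split; [auto|].
    pose proof (sum_ge_term (fun k => H j k) n k (fun k => Hnn j k Hj) Hk).
    pose proof (sum_ge_term (fun j => sum_f_R0 (fun k => H j k) n) n j Hrow Hj).
    unfold M. lra. }
  set (K := (sum_f_R0 b n) ^ 2 / (INR n + 1)).
  assert (Hlevels := is_RInt_quad_form_levels H b n M HM).
  assert (Hlow : is_RInt (fun t => K * indic_le m t) 0 M (K * m)).
  { apply (is_RInt_scal (V := R_NormedModule)), is_RInt_indic_le. lra. }
  assert (Hle : RInt (fun t => K * indic_le m t) 0 M
                <= RInt (fun t => quad_form (fun j k => indic_le (H j k) t) b n) 0 M).
  { apply RInt_le; [lra| eexists; eauto | eexists; eauto |].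
    intros t _. apply quad_form_level_lower_bound; auto. }
  rewrite (is_RInt_unique _ _ _ _ Hlevels), (is_RInt_unique _ _ _ _ Hlow) in Hle.
  unfold K in Hle. unfold Rdiv in *. lra.
Qed.

Definition gromov {T : Type} (d : T -> T -> R) (w x y : T) : R :=
  (d w x + d w y - d x y) / 2.

Lemma inj_cont_path_rescale {T : Type} (d : T -> T -> R) x y (q : R -> T) L :
  0 < L -> q 0 = x -> q L = y ->
  (forall u v, 0 <= u <= L -> 0 <= v <= L -> d (q u) (q v) <= Rabs (u - v)) ->
  (forall u v, 0 <= u <= L -> 0 <= v <= L -> q u = q v -> u = v) ->
  inj_cont_path d x y (fun t => q (t * L)).
Proof.
  intros HL Hq0 HqL Hlip Hinj.
  assert (Hrange : forall t, 0 <= t <= 1 -> 0 <= t * L <= L) by (intros; nra).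
  split; [|split; [|split]].
  - rewrite Rmult_0_l. exact Hq0.
  - rewrite Rmult_1_l. exact HqL.
  - intros t Ht eps Heps. exists (eps / L). split; [apply Rdiv_lt_0_compat; lra|].
    intros t' Ht' Htt'. eapply Rle_lt_trans; [apply Hlip; auto|].
    replace (t * L - t' * L) with ((t - t') * L) by ring.
    rewrite Rabs_mult, (Rabs_right L) by lra.
    apply Rlt_le_trans with (eps / L * L); [apply Rmult_lt_compat_r; lra | right; field; lra].
  - intros s t Hs Ht Hst. apply Rmult_eq_reg_r with L; [apply Hinj; auto | lra].
Qed.

Section RTree.
Variable T : Type.
Variable d : T -> T -> R.
Hypothesis tree : is_Rtree d.

Lemma d_nonneg x y : 0 <= d x y. Proof. apply tree. Qed.
Lemma d_eq0 x y : d x y = 0 -> x = y. Proof. apply tree. Qed.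
Lemma d_refl x : d x x = 0. Proof. apply tree; reflexivity. Qed.
Lemma d_sym x y : d x y = d y x. Proof. apply tree. Qed.
Lemma d_triangle x y z : d x z <= d x y + d y z. Proof. apply tree. Qed.

Definition between x c y := d x c + d c y = d x y.

Lemma geodesic_dist x y g : is_geodesic d x y g ->
  forall s, 0 <= s <= d x y -> d x (g s) = s /\ d (g s) y = d x y - s.
Proof.
  intros [G0 [G1 G2]] s Hs. pose proof (d_nonneg x y). split.
  - rewrite <- G0 at 1. rewrite G2 by lra. rewrite Rabs_left1 by lra. ring.
  - rewrite <- G1 at 1. rewrite G2 by lra. rewrite Rabs_left1 by lra. ring.
Qed.

Lemma geodesic_shift w x g t : is_geodesic d w x g -> 0 <= t <= d w x ->
  is_geodesic d (g t) x (fun u => g (t + u)).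
Proof.
  intros Hg Ht. destruct (geodesic_dist w x g Hg t Ht) as [_ Htx].
  destruct Hg as [_ [G1 G2]]. unfold is_geodesic. rewrite Htx.
  split; [|split].
  - rewrite Rplus_0_r. reflexivity.
  - replace (t + (d w x - t)) with (d w x) by ring. exact G1.
  - intros u v Hu Hv. rewrite G2 by lra. f_equal. ring.
Qed.

Lemma geodesic_concat x c y g1 g2 :
  between x c y -> is_geodesic d x c g1 -> is_geodesic d c y g2 ->
  is_geodesic d x y (fun s => if Rle_dec s (d x c) then g1 s else g2 (s - d x c)).
Proof.
  intros Hb Hg1 Hg2.
  pose proof (geodesic_dist _ _ _ Hg1) as D1. pose proof (geodesic_dist _ _ _ Hg2) as D2.
  destruct Hg1 as [A0 [A1 A2]], Hg2 as [B0 [B1 B2]].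
  unfold between in Hb. pose proof (d_nonneg x c). pose proof (d_nonneg c y).
  assert (Hcross : forall s t, 0 <= s <= d x c -> d x c < t <= d x y ->
                     d (g1 s) (g2 (t - d x c)) = t - s).
  { intros s t Hs Ht.
    destruct (D1 s Hs) as [Hxs Hsc]. destruct (D2 (t - d x c)) as [Hct Hty]; [lra|].
    pose proof (d_triangle (g1 s) c (g2 (t - d x c))).
    pose proof (d_triangle x (g1 s) y). pose proof (d_triangle (g1 s) (g2 (t - d x c)) y).
    lra. }
  split; [|split]; cbv beta.
  - destruct Rle_dec; [exact A0 | lra].
  - destruct Rle_dec.
    + assert (Hcy : c = y) by (apply d_eq0; lra). subst y. exact A1.
    + replace (d x y - d x c) with (d c y) by lra. exact B1.
  - intros s t Hs Ht.
    destruct (Rle_dec s (d x c)), (Rle_dec t (d x c)).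
    + apply A2; lra.
    + rewrite Hcross by lra. rewrite Rabs_left1 by lra. ring.
    + rewrite d_sym, Hcross by lra. rewrite Rabs_right by lra. ring.
    + rewrite B2 by lra. f_equal. ring.
Qed.

Lemma between_on_geodesic x c y g : between x c y -> is_geodesic d x y g -> g (d x c) = c.
Proof.
  intros Hb Hg.
  destruct tree as [_ [Hex [Huniq _]]].
  destruct (Hex x c) as [g1 Hg1], (Hex c y) as [g2 Hg2].
  pose proof (geodesic_concat x c y g1 g2 Hb Hg1 Hg2) as Hh.
  unfold between in Hb. pose proof (d_nonneg x c). pose proof (d_nonneg c y).
  rewrite (Huniq x y g _ Hg Hh (d x c)) by lra. cbv beta.
  destruct Rle_dec; [apply Hg1 | lra].
Qed.

Lemma in_arc_between x y z : in_arc d x y z <-> between x z y.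
Proof.
  split.
  - intros [g [Hg [s [Hs <-]]]]. destruct (geodesic_dist x y g Hg s Hs).
    unfold between. lra.
  - intros Hb. destruct tree as [_ [Hex _]]. destruct (Hex x y) as [g Hg].
    exists g. split; [exact Hg|]. exists (d x z). split.
    + unfold between in Hb. pose proof (d_nonneg x z). pose proof (d_nonneg z y). lra.
    + apply (between_on_geodesic x z y); auto.
Qed.

Lemma between_order w c c' z :
  between w c z -> between w c' z -> d w c <= d w c' -> between w c c'.
Proof.
  intros H1 H2 Hle. destruct tree as [_ [Hex _]]. destruct (Hex w z) as [g Hg].
  pose proof (between_on_geodesic _ _ _ g H1 Hg) as E1.
  pose proof (between_on_geodesic _ _ _ g H2 Hg) as E2.
  destruct Hg as [_ [_ G2]]. unfold between in *.
  pose proof (d_nonneg w c). pose proof (d_nonneg c z).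
  pose proof (d_nonneg w c'). pose proof (d_nonneg c' z).
  assert (D : d (g (d w c)) (g (d w c')) = d w c' - d w c)
    by (rewrite G2 by lra; rewrite Rabs_left1 by lra; ring).
  rewrite E1, E2 in D. lra.
Qed.

Lemma between_trans w z c a : between w z c -> between w c a -> between w z a.
Proof.
  unfold between. intros H1 H2. pose proof (d_triangle z c a). pose proof (d_triangle w z a). lra.
Qed.

Section Legs.
Variables c x y : T.
Variables h1 h2 : R -> T.
Hypothesis leg1 : is_geodesic d c x h1.
Hypothesis leg2 : is_geodesic d c y h2.
Hypothesis legs_disjoint :
  forall u v, 0 <= u <= d c x -> 0 <= v <= d c y -> h1 u = h2 v -> v = 0.

Let glue u := if Rle_dec u (d c x) then h1 (d c x - u) else h2 (u - d c x).

Lemma glue_dist_center u : 0 <= u <= d c x + d c y -> d (glue u) c = Rabs (u - d c x).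
Proof.
  intros Hu. destruct leg1 as [A0 [_ A2]], leg2 as [B0 [_ B2]].
  unfold glue. destruct Rle_dec.
  - rewrite <- A0 at 2. rewrite A2 by (pose proof (d_nonneg c x); lra).
    rewrite Rabs_minus_sym. f_equal. ring.
  - rewrite <- B0 at 2. rewrite B2 by (pose proof (d_nonneg c y); lra). f_equal. ring.
Qed.

Lemma glue_same_leg u v :
  0 <= u <= d c x + d c y -> 0 <= v <= d c x + d c y ->
  (u <= d c x /\ v <= d c x \/ d c x < u /\ d c x < v) ->
  d (glue u) (glue v) = Rabs (u - v).
Proof.
  intros Hu Hv Hside. destruct leg1 as [_ [_ A2]], leg2 as [_ [_ B2]]. unfold glue.
  destruct Hside as [[Hu1 Hv1] | [Hu2 Hv2]];
    destruct (Rle_dec u (d c x)), (Rle_dec v (d c x)); try lra.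
  - rewrite A2 by lra. rewrite Rabs_minus_sym. f_equal. ring.
  - rewrite B2 by lra. f_equal. ring.
Qed.

Lemma glue_cross u v :
  0 <= u <= d c x -> d c x < v <= d c x + d c y ->
  d (glue u) (glue v) <= Rabs (u - v) /\ glue u <> glue v.
Proof.
  intros Hu Hv. split.
  - eapply Rle_trans; [apply (d_triangle _ c)|].
    rewrite (d_sym c), !glue_dist_center by lra.
    unfold Rabs; repeat destruct Rcase_abs; lra.
  - unfold glue. destruct (Rle_dec u (d c x)), (Rle_dec v (d c x)); try lra.
    intros Heq. assert (v - d c x = 0) by (apply (legs_disjoint (d c x - u)); auto; lra).
    lra.
Qed.

Lemma glue_path : 0 < d c x + d c y ->
  inj_cont_path d x y (fun t => glue (t * (d c x + d c y))).
Proof.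
  intros HL. destruct leg1 as [A0 [A1 _]], leg2 as [_ [B1 _]].
  pose proof (d_nonneg c x). pose proof (d_nonneg c y).
  apply inj_cont_path_rescale; auto.
  - unfold glue. destruct Rle_dec; [|lra]. rewrite Rminus_0_r. exact A1.
  - unfold glue. destruct Rle_dec.
    + replace (d c x - (d c x + d c y)) with 0 by lra. rewrite A0. apply d_eq0. lra.
    + replace (d c x + d c y - d c x) with (d c y) by ring. exact B1.
  - intros u v Hu Hv.
    destruct (Rle_dec u (d c x)), (Rle_dec v (d c x)).
    + right. apply glue_same_leg; auto.
    + apply glue_cross; lra.
    + rewrite d_sym, Rabs_minus_sym. apply glue_cross; lra.
    + right. apply glue_same_leg; auto; right; lra.
  - intros u v Hu Hv Heq.
    destruct (Rle_dec u (d c x)), (Rle_dec v (d c x)).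
    + pose proof (glue_same_leg u v Hu Hv ltac:(left; lra)) as Huv.
      rewrite Heq, d_refl in Huv. unfold Rabs in Huv; destruct Rcase_abs; lra.
    + exfalso. apply (glue_cross u v); auto; lra.
    + exfalso. apply (glue_cross v u); auto; lra.
    + pose proof (glue_same_leg u v Hu Hv ltac:(right; lra)) as Huv.
      rewrite Heq, d_refl in Huv. unfold Rabs in Huv; destruct Rcase_abs; lra.
Qed.

Lemma between_of_legs : between x c y.
Proof.
  pose proof (d_nonneg c x). pose proof (d_nonneg c y).
  destruct (Req_dec (d c x + d c y) 0) as [HL0 | HL].
  { assert (Hx : c = x) by (apply d_eq0; lra). assert (Hy : c = y) by (apply d_eq0; lra).
    unfold between. rewrite <- Hx, <- Hy, d_refl. ring. }
  apply in_arc_between.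
  destruct tree as [_ [_ [_ Harc]]].
  apply (Harc x y _ (glue_path ltac:(lra)) c).
  exists (d c x / (d c x + d c y)). split.
  - split; [apply Rdiv_le_0_compat; lra|].
    apply Rmult_le_reg_r with (d c x + d c y); [lra|].
    unfold Rdiv. rewrite Rmult_assoc, Rinv_l by lra. lra.
  - replace (d c x / (d c x + d c y) * (d c x + d c y)) with (d c x) by (field; lra).
    unfold glue. destruct Rle_dec; [|lra]. rewrite Rminus_diag. apply leg1.
Qed.

End Legs.

Lemma last_common_point w x y g1 g2 :
  is_geodesic d w x g1 -> is_geodesic d w y g2 ->
  exists ts, 0 <= ts <= Rmin (d w x) (d w y) /\ g1 ts = g2 ts /\
    forall u, 0 <= u <= Rmin (d w x) (d w y) -> g1 u = g2 u -> u <= ts.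
Proof.
  intros [A0 [_ A2]] [B0 [_ B2]].
  set (M := Rmin (d w x) (d w y)).
  assert (HM1 : M <= d w x) by apply Rmin_l. assert (HM2 : M <= d w y) by apply Rmin_r.
  assert (HM0 : 0 <= M) by (apply Rmin_glb; apply d_nonneg).
  set (E := fun t => 0 <= t <= M /\ g1 t = g2 t).
  destruct (completeness E) as [ts [Hub Hlub]].
  { exists M. intros t [Ht _]. lra. }
  { exists 0. split; [lra | congruence]. }
  assert (Hts : 0 <= ts <= M).
  { split; [apply Hub; split; [lra | congruence] | apply Hlub; intros t [Ht _]; lra]. }
  exists ts. split; [exact Hts|]. split; [|intros u Hu Hequ; apply Hub; split; auto].
  (* [E] is closed: common points accumulating at [ts] force [g1 ts = g2 ts]. *)
  apply d_eq0. destruct (Rle_lt_or_eq_dec 0 _ (d_nonneg (g1 ts) (g2 ts))) as [Hpos|]; [|auto].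
  exfalso.
  assert (Hex : exists t, E t /\ ts - d (g1 ts) (g2 ts) / 2 < t).
  { apply NNPP. intros Hn.
    assert (ts <= ts - d (g1 ts) (g2 ts) / 2); [|lra].
    apply Hlub. intros t Et. apply Rnot_lt_le. intros Hlt. apply Hn. exists t. auto. }
  destruct Hex as [t [[Ht Et] Hlt]].
  assert (t <= ts) by (apply Hub; split; auto).
  pose proof (d_triangle (g1 ts) (g1 t) (g2 ts)) as Htri.
  rewrite A2, Et, B2 in Htri by lra.
  rewrite (Rabs_minus_sym t ts), Rabs_right in Htri by lra. lra.
Qed.

Lemma tripod w x y : exists c, between w c x /\ between w c y /\ between x c y.
Proof.
  destruct tree as [_ [Hex _]].
  destruct (Hex w x) as [g1 Hg1], (Hex w y) as [g2 Hg2].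
  destruct (last_common_point w x y g1 g2 Hg1 Hg2) as [ts [Hts [Heq Hlast]]].
  pose proof (Rmin_l (d w x) (d w y)). pose proof (Rmin_r (d w x) (d w y)).
  destruct (geodesic_dist _ _ _ Hg1 ts ltac:(lra)) as [D1w D1x].
  destruct (geodesic_dist _ _ _ Hg2 ts ltac:(lra)) as [D2w D2y].
  exists (g1 ts). split; [|split].
  - unfold between. lra.
  - unfold between. rewrite Heq. lra.
  - apply (between_of_legs (g1 ts) x y (fun u => g1 (ts + u)) (fun u => g2 (ts + u))).
    + apply (geodesic_shift w); auto; lra.
    + rewrite Heq. apply (geodesic_shift w); auto; lra.
    + rewrite D1x. rewrite Heq, D2y. intros u v Hu Hv Huv.
      destruct (geodesic_dist _ _ _ Hg1 (ts + u) ltac:(lra)) as [Hu' _].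
      destruct (geodesic_dist _ _ _ Hg2 (ts + v) ltac:(lra)) as [Hv' _].
      rewrite Huv in Hu'. rewrite Hu' in Hv'.
      assert (ts + u <= ts) by (apply Hlast; [split; [lra | apply Rmin_glb; lra] | congruence]).
      lra.
Qed.

Lemma gromov_branch w x y c :
  between w c x -> between w c y -> between x c y -> gromov d w x y = d w c.
Proof. unfold between, gromov. rewrite (d_sym x c). intros. lra. Qed.

Lemma gromov_ge_of_between w x y c :
  between w c x -> between w c y -> d w c <= gromov d w x y.
Proof.
  unfold between, gromov. intros. pose proof (d_triangle x c y). rewrite (d_sym x c) in *. lra.
Qed.

Lemma gromov_nonneg w x y : 0 <= gromov d w x y.
Proof. unfold gromov. pose proof (d_triangle x w y). rewrite (d_sym x w) in *. lra. Qed.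

Lemma gromov_sym w x y : gromov d w x y = gromov d w y x.
Proof. unfold gromov. rewrite (d_sym x y). lra. Qed.

Lemma gromov_diag w x : gromov d w x x = d w x.
Proof. unfold gromov. rewrite d_refl. lra. Qed.

Lemma gromov_ultrametric w x y z :
  Rmin (gromov d w x z) (gromov d w z y) <= gromov d w x y.
Proof.
  destruct (tripod w x z) as [c [Hcx [Hcz Hxz]]].
  destruct (tripod w z y) as [c' [Hcz' [Hcy Hzy]]].
  rewrite (gromov_branch w x z c), (gromov_branch w z y c') by auto.
  destruct (Rle_dec (d w c) (d w c')) as [Hle|Hlt].
  - rewrite Rmin_left by auto. apply gromov_ge_of_between; auto.
    apply (between_trans w c c' y); auto. apply (between_order w c c' z); auto.
  - rewrite Rmin_right by lra. apply gromov_ge_of_between; auto.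
    apply (between_trans w c' c x); auto. apply (between_order w c' c z); auto; lra.
Qed.

Lemma cov_eq_gromov rho (C : T -> T -> R) :
  (forall a b m, is_mrca d rho a b m -> C a b = d rho m) ->
  forall a b, C a b = gromov d rho a b.
Proof.
  intros HC a b. destruct (tripod rho a b) as [c [Hca [Hcb Hab]]].
  rewrite (gromov_branch rho a b c) by auto. apply HC.
  intros z. rewrite !in_arc_between. split.
  - intros Hz. split; eapply between_trans; eauto.
  - intros [Hza Hzb]. destruct (Rle_dec (d rho z) (d rho c)) as [Hle|Hlt].
    + apply (between_order rho z c a); auto.
    + exfalso. pose proof (gromov_ge_of_between rho a b z Hza Hzb) as Hz.
      rewrite (gromov_branch rho a b c) in Hz by auto. lra.
Qed.

End RTree.

Lemma lin_var_add_potential {T : Type} (C H : T -> T -> R) (v : T -> R) sigma s N a :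
  (forall x y, C x y = H x y + v x + v y) ->
  lin_var C sigma s N a
  = lin_var H sigma s N a
    + 2 * (1 - sum_f_R0 a N) * (v sigma - sum_f_R0 (fun i => a i * v (s i)) N).
Proof.
  intros HC. unfold lin_var.
  set (A := sum_f_R0 a N). set (V := sum_f_R0 (fun i => a i * v (s i)) N).
  assert (Hlin : sum_f_R0 (fun i => a i * C sigma (s i)) N
                 = sum_f_R0 (fun i => a i * H sigma (s i)) N + v sigma * A + V).
  { unfold A, V. rewrite <- sum_mult_l, <- !sum_plus. apply sum_eq; intros. rewrite HC. ring. }
  assert (Hquad : sum_f_R0 (fun i => sum_f_R0 (fun j => a i * a j * C (s i) (s j)) N) N
      = sum_f_R0 (fun i => sum_f_R0 (fun j => a i * a j * H (s i) (s j)) N) N + 2 * A * V).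
  { transitivity (sum_f_R0 (fun i => sum_f_R0 (fun j => a i * a j * H (s i) (s j)) N
                    + a i * v (s i) * A + a i * V) N).
    - apply sum_eq; intros i _. unfold A, V. rewrite <- !sum_mult_l, <- !sum_plus.
      apply sum_eq; intros. rewrite HC. ring.
    - rewrite !sum_plus, <- (scal_sum (fun i => a i * v (s i)) N A), <- (scal_sum a N V).
      unfold A, V. ring. }
  rewrite HC, Hlin, Hquad. ring.
Qed.

Lemma quad_form_add_delta0 (H : nat -> nat -> R) (a : nat -> R) t n :
  (forall i j, H i j = H j i) ->
  quad_form H (fun i => a i + t * delta0 i) n
  = quad_form H a n + 2 * t * sum_f_R0 (fun j => a j * H O j) n + t ^ 2 * H O O.
Proof.
  intros Hsym. unfold quad_form.
  transitivity (sum_f_R0 (fun i => sum_f_R0 (fun j => a i * a j * H i j) n + t * (a i * H i O)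
                  + delta0 i * (t * sum_f_R0 (fun j => a j * H i j) n + t ^ 2 * H i O)) n).
  - apply sum_eq; intros i _.
    transitivity (sum_f_R0 (fun j => a i * a j * H i j + delta0 i * t * (a j * H i j)
                    + delta0 j * (t * a i * H i j + delta0 i * t ^ 2 * H i j)) n).
    + apply sum_eq; intros; ring.
    + rewrite !sum_plus, sum_delta0, sum_mult_l. ring.
  - rewrite !sum_plus, sum_delta0, sum_mult_l.
    rewrite (sum_eq (fun i => a i * H i O) (fun j => a j * H O j)) by (intros; rewrite Hsym; ring).
    ring.
Qed.

Lemma lin_var_gromov_rebase {T : Type} (d C : T -> T -> R) rho sigma s N a :
  (forall x y, d x y = d y x) -> (forall x, d x x = 0) ->
  (forall x y, C x y = gromov d rho x y) -> s O = rho ->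
  lin_var C sigma s N a
  = quad_form (fun i j => gromov d sigma (s i) (s j))
      (fun i => a i + (1 - sum_f_R0 a N) * delta0 i) N.
Proof.
  intros Hsym Hrefl HC Hs0.
  set (v := fun x => (d rho x - d sigma x) / 2).
  rewrite (lin_var_add_potential C (gromov d sigma) v)
    by (intros; rewrite HC; unfold gromov, v; field).
  rewrite quad_form_add_delta0 by (intros; unfold gromov; rewrite (Hsym (s i) (s j)); lra).
  assert (Hcenter : forall x, gromov d sigma sigma x = 0)
    by (intros; unfold gromov; rewrite Hrefl; lra).
  assert (Hrow : sum_f_R0 (fun j => a j * gromov d sigma (s O) (s j)) N
                 = sum_f_R0 a N * d sigma rho / 2 - sum_f_R0 (fun j => a j * v (s j)) N).
  { transitivity (sum_f_R0 (fun j => a j * (d sigma rho / 2) - a j * v (s j)) N).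
    - apply sum_eq; intros. rewrite Hs0. unfold gromov, v. field.
    - rewrite minus_sum, <- (scal_sum a N (d sigma rho / 2)). field. }
  unfold lin_var at 1. rewrite Hcenter, sum_zero by (intros; rewrite Hcenter; ring).
  rewrite Hrow, Hs0.
  replace (gromov d sigma rho rho) with (d sigma rho) by (unfold gromov; rewrite Hrefl; lra).
  unfold quad_form, v. rewrite Hrefl, (Hsym rho sigma). field.
Qed.

Lemma min_upto_le (f : nat -> R) n i : (i <= n)%nat -> min_upto f n <= f i.
Proof.
  induction n as [|n IH]; intros Hi; simpl.
  - replace i with 0%nat by lia. lra.
  - destruct (Nat.eq_dec i (S n)) as [->|Hne]; [apply Rmin_r|].
    eapply Rle_trans; [apply Rmin_l | apply IH; lia].
Qed.

Lemma min_upto_nonneg (f : nat -> R) n : (forall i, 0 <= f i) -> 0 <= min_upto f n.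
Proof. intros Hf. induction n as [|n IH]; simpl; auto. apply Rmin_glb; auto. Qed.

Theorem lemma2p1 :
  forall N : nat, (1 <= N)%nat ->
  exists c : R, 0 < c /\
  forall (T : Type) (d : T -> T -> R) (rho : T),
    is_Rtree d -> seq_compact d ->
  forall C : T -> T -> R,
    (forall a b m, is_mrca d rho a b m -> C a b = d rho m) ->
  forall (sigma : T) (s : nat -> T), s O = rho ->
  forall a : nat -> R,
    lin_var C sigma s N a >= c * min_upto (fun i => d sigma (s i)) N.
Proof.
  intros N _.
  assert (HN : 0 < INR N + 1) by (pose proof (pos_INR N); lra).
  exists (1 / (INR N + 1)). split; [apply Rdiv_lt_0_compat; lra|].
  intros T d rho tree _ C HC sigma s Hs0 a.
  set (m := min_upto (fun i => d sigma (s i)) N).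
  set (b := fun i => a i + (1 - sum_f_R0 a N) * delta0 i).
  assert (Hb : sum_f_R0 b N = 1).
  { unfold b. rewrite sum_plus, sum_mult_l.
    replace (sum_f_R0 delta0 N) with 1 by (rewrite <- (sum_delta0 (fun _ => 1) N); apply sum_eq; intros; ring).
    ring. }
  rewrite (lin_var_gromov_rebase d C rho sigma s N a (d_sym T d tree) (d_refl T d tree)
             (cov_eq_gromov T d tree rho C HC) Hs0).
  fold b. apply Rle_ge.
  replace (1 / (INR N + 1) * m) with (m * (sum_f_R0 b N) ^ 2 / (INR N + 1)) by (rewrite Hb; field; lra).
  apply ultrametric_quad_lower_bound.
  - apply min_upto_nonneg. intros; apply d_nonneg, tree.
  - intros; apply gromov_nonneg, tree.
  - intros; apply gromov_sym, tree.
  - intros; apply gromov_ultrametric, tree.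
  - intros j Hj. rewrite gromov_diag by exact tree. apply (min_upto_le (fun i => d sigma (s i))), Hj.
Qed.
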